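(* For a parking graph $P$ on $[n]$, let $\mathbf{d}(P)=(d_1,\dots,d_n)$ where $d_i$ is the number of directed edges (up or down edges) of $P$ pointing into vertex $i$ (downish edges are not counted), and set $\phi(P):=\mathbf{d}(P)+(1,1,\dots,1)$. Then $\phi$ is a bijection from the set of parking graphs on $[n]$ to the set of parking functions of length $n$.
   Context: A parking function of length $n$ is a sequence $(x_1,\dots,x_n)$ of positive integers which, when rearranged in weakly increasing order $x_{(1)}\le\dots\le x_{(n)}$, satisfies $x_{(k)}\le k$ for all $k$; equivalently, it is componentwise at most some permutation of $(1,2,\dots,n)$. A mixed graph may contain both undirected and directed edges. A parking graph $P$ on $[n]$ is a mixed graph with vertex set $[n]$ in which every pair $\{j,k\}$ with $1\le j<k\le n$ is joined by exactly one edge, which is of exactly one of three types: a down edge $j\leftarrow k$ (directed from $k$ to $j$), an up edge $j\rightarrow k$ (directed from $j$ to $k$), or a downish edge $jk$ (undirected). Let $\vec P$ be the directed graph obtained from $P$ by keeping all directed edges and replacing every downish edge $jk$ ($j<k$) by the directed edge $j\leftarrow k$. $P$ must satisfy the source-sink condition: (i) $\vec P$ is acyclic, and (ii) for every triangle of $P$ among whose three edges there is at least one down edge and at least one downish edge, the source (vertex of in-degree $0$ within the triangle in $\vec P$) and the sink (vertex of out-degree $0$ within the triangle in $\vec P$) are not joined by a downish edge in $P$. *)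

From HB Require Import structures.
From mathcomp Require Import all_boot.
Set Implicit Arguments. Unset Strict Implicit. Unset Printing Implicit Defensive.

(* Edge types of a parking graph, for a pair j < k:
   Down    : j <- k  (directed from k to j)
   Up      : j -> k  (directed from j to k)
   Downish : undirected edge jk *)
Inductive etype := Down | Up | Downish.

Definition etype_code (e : etype) : 'I_3 :=
  match e with Down => inord 0 | Up => inord 1 | Downish => inord 2 end.
Definition etype_decode (i : 'I_3) : etype :=
  match val i with 0 => Down | 1 => Up | _ => Downish end.
Lemma etype_codeK : cancel etype_code etype_decode.
Proof. by case; rewrite /etype_decode /= inordK. Qed.
HB.instance Definition _ := Equality.copy etype (can_type etype_codeK).
HB.instance Definition _ := Finite.copy etype (can_type etype_codeK).

(* Vertex set [n] is modelled by 'I_n (vertex i+1 <-> ordinal i; order preserved). *)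
(* Unordered pairs {j,k} are the ordered pairs with j < k. *)
Definition pairs (n : nat) := {p : 'I_n * 'I_n | p.1 < p.2}.

Definition mgraph (n : nat) := {ffun pairs n -> etype}.

(* Type of the edge {j,k}, for j < k (dummy value otherwise). *)
Definition ed n (G : mgraph n) (j k : 'I_n) : etype :=
  match insub (j, k) : option (pairs n) with Some p => G p | None => Down end.

Definition kind n (G : mgraph n) (u v : 'I_n) : etype :=
  if u < v then ed G u v else ed G v u.

(* Arc u -> v in the directed graph vec P (downish edges jk, j<k, become j <- k). *)
Definition arc n (G : mgraph n) : rel 'I_n := fun u v =>
  if u < v then ed G u v == Up
  else if v < u then ed G v u != Up
  else false.

Definition acyclicb n (G : mgraph n) : bool :=
  [forall u, forall v, arc G u v ==> ~~ connect (arc G) v u].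

Definition triangle_condb n (G : mgraph n) : bool :=
  [forall a, forall b, forall c,
     [&& arc G a b, arc G b c & arc G a c] ==>
     (Down \in [:: kind G a b; kind G b c; kind G a c]) ==>
     (Downish \in [:: kind G a b; kind G b c; kind G a c]) ==>
     (kind G a c != Downish)].

Definition parking_graph n (G : mgraph n) : bool := acyclicb G && triangle_condb G.

Definition indeg n (G : mgraph n) (i : 'I_n) : nat :=
  #|[set j | arc G j i && (kind G j i != Downish)]|.

Definition phi n (G : mgraph n) : n.-tuple nat := [tuple (indeg G i).+1 | i < n].

Definition parking_function n (x : n.-tuple nat) : bool :=
  all (fun a => 0 < a) x &&
  [forall k : 'I_n, nth 0 (sort leq x) k <= k.+1].

(* Acyclicity makes the tournament [vec P] transitive, so the vertices are linearly
   ordered by their rank (number of in-arcs); since a vertex's in-degree is at most its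
   rank, the first [k] vertices have [d_i < k], which is the parking condition.  The
   triangle condition says that a down arc [a -> c] survives moving its source earlier
   or its target later in this order (as long as the target stays smaller than the
   source).  Hence the degrees determine the graph: position by position, the vertex
   of rank [t] is the largest vertex outside the first [t] whose degree is exactly the
   number of smaller vertices among the first [t] plus the number of larger vertices
   among the first [reach t.+1] (one past the last source of a down arc into the first
   [t.+1] vertices), and [reach t.+1] is the least level [>= reach t] at which such a
   vertex exists; the down arcs into each vertex then form an initial
   segment of known size.  Conversely, given a parking function, placing greedily at
   each position the largest such vertex for the largest admissible level builds a
   parking graph with the prescribed degrees. *)

From Pilot Require Import Defs.
From mathcomp Require Import all_boot.
Set Implicit Arguments. Unset Strict Implicit. Unset Printing Implicit Defensive.
(* [path] also exports an [arc]. *)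
Local Notation arc := Defs.arc.

Lemma count_tuple_card n (x : n.-tuple nat) (P : pred nat) :
  count P x = #|[set i : 'I_n | P (tnth x i)]|.
Proof.
rewrite -sum1_count -[in LHS](map_tnth_enum x) big_map -sum1dep_card.
by rewrite big_enum_cond.
Qed.

Lemma card_ord_lt n m : m <= n -> #|[set i : 'I_n | i < m]| = m.
Proof.
elim: m => [|m IHm] lt_mn.
  by apply/eqP; rewrite cards_eq0; apply/eqP/setP => i; rewrite !inE.
have -> : [set i : 'I_n | i < m.+1] = Ordinal lt_mn |: [set i : 'I_n | i < m].
  by apply/setP => i; rewrite !inE ltnS leq_eqVlt -val_eqE.
by rewrite cardsU1 IHm ?(ltnW lt_mn) // inE /= ltnn.
Qed.

Lemma nth_sort_leqE (s : seq nat) k b : k < size s ->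
  (nth 0 (sort leq s) k <= b) = (k < count (leq^~ b) s).
Proof.
move=> lt_ks; set s' := sort leq s.
have sorted_s' : sorted leq s' by apply: sort_sorted; exact: leq_total.
have lt_ks' : k < size s' by rewrite size_sort.
have mono i j : i <= j < size s' -> nth 0 s' i <= nth 0 s' j.
  by case/andP=> le_ij lt_j; apply: (sorted_leq_nth leq_trans leqnn 0 sorted_s');
     rewrite // inE (leq_ltn_trans le_ij).
have -> : count (leq^~ b) s = count (leq^~ b) s' by apply/permP; rewrite perm_sym perm_sort.
apply/idP/idP => [le_b|].
  rewrite -(cat_take_drop k.+1 s') count_cat; apply: leq_trans (leq_addr _ _).
  have /eqP -> : count (leq^~ b) (take k.+1 s') == size (take k.+1 s').
    rewrite -all_count; apply/(all_nthP 0) => i; rewrite size_takel // => lt_ik.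
    by rewrite nth_take // (leq_trans _ le_b) // mono // lt_ks' -ltnS lt_ik.
  by rewrite size_takel.
apply: contraLR; rewrite -ltnNge => lt_b; rewrite -leqNgt.
rewrite -(cat_take_drop k s') count_cat.
have /eqP -> : count (leq^~ b) (drop k s') == 0.
  rewrite -leqn0 leqNgt -has_count; apply/(has_nthP 0) => -[i].
  rewrite size_drop ltn_subRL nth_drop => lt_i; apply/negP; rewrite -ltnNge.
  by apply: leq_trans lt_b _; rewrite mono // leq_addr.
by rewrite addn0 (leq_trans (count_size _ _)) // size_take lt_ks'.
Qed.

Definition etype_eqb (x y : etype) : bool :=
  match x, y with Down, Down | Up, Up | Downish, Downish => true | _, _ => false end.

Lemma etype_eqE (x y : etype) : (x == y) = etype_eqb x y.
Proof. by apply/eqP/idP => [->|]; [case: y | case: x; case: y]. Qed.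

Lemma etype_eq_notUp (x y : etype) :
  x != Up -> y != Up -> (x == Down) = (y == Down) -> x = y.
Proof. by case: x; case: y; rewrite !etype_eqE. Qed.

Lemma card_proper_mem (T : finType) (A B : {set T}) x :
  A \subset B -> x \in B -> x \notin A -> #|A| < #|B|.
Proof. by move=> sAB xB xA; apply: proper_card; apply/properP; split => //; exists x. Qed.

Definition candidates n (d : 'I_n -> nat) (A B : {set 'I_n}) : {set 'I_n} :=
  [set v | (v \notin A) && (d v == #|[set u in A | u < v]| + #|[set u in B | v < u]|)].

Lemma notin_candidates n (d : 'I_n -> nat) (A B : {set 'I_n}) (w : 'I_n) :
  #|[set u in A | u < w]| + #|[set u in B | w < u]| < d w -> w \notin candidates d A B.
Proof. by move=> lt_d; rewrite inE (gtn_eqF lt_d) andbF. Qed.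

Section MixedGraph.
Variables (n : nat) (G : mgraph n).
Implicit Types u v a b c : 'I_n.

Definition down_arc a c := (c < a) && (ed G c a == Down).

Definition rank u := #|[set j | arc G j u]|.

Lemma arc_irr u : arc G u u = false.
Proof. by rewrite /arc ltnn. Qed.

Lemma arc_lt u v : u < v -> arc G u v = (ed G u v == Up).
Proof. by rewrite /arc => ->. Qed.

Lemma arc_gt u v : v < u -> arc G u v = (ed G v u != Up).
Proof. by rewrite /arc => lt_vu; rewrite ltnNge (ltnW lt_vu) /= lt_vu. Qed.

Lemma kind_lt u v : u < v -> kind G u v = ed G u v.
Proof. by rewrite /kind => ->. Qed.

Lemma kind_gt u v : v < u -> kind G u v = ed G v u.
Proof. by rewrite /kind => lt_vu; rewrite ltnNge (ltnW lt_vu). Qed.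

Lemma arc_total u v : u != v -> arc G u v || arc G v u.
Proof.
move=> neq_uv; case: (ltngtP u v) => [lt_uv|lt_vu|/val_inj eq_uv].
- by rewrite (arc_lt lt_uv) (arc_gt lt_uv) orbN.
- by rewrite (arc_gt lt_vu) (arc_lt lt_vu) orNb.
- by rewrite eq_uv eqxx in neq_uv.
Qed.

Lemma arc_asym u v : arc G u v -> arc G v u = false.
Proof.
case: (ltngtP u v) => [lt_uv|lt_vu|/val_inj ->]; last by rewrite arc_irr.
  by rewrite (arc_lt lt_uv) (arc_gt lt_uv) => ->.
by rewrite (arc_gt lt_vu) (arc_lt lt_vu) => /negbTE.
Qed.

Lemma down_arc_lt a c : down_arc a c -> c < a.
Proof. by case/andP. Qed.

Lemma down_arc_arc a c : down_arc a c -> arc G a c.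
Proof. by case/andP=> lt_ca /eqP e; rewrite (arc_gt lt_ca) e etype_eqE. Qed.

Lemma indeg_split v :
  indeg G v = #|[set u | arc G u v & u < v]| + #|[set u | down_arc u v]|.
Proof.
rewrite /indeg -(cardsID [set u : 'I_n | u < v]); congr (_ + _);
  apply: eq_card => u; rewrite !inE.
  case: (ltnP u v) => [lt_uv|_]; last by rewrite !andbF.
  by rewrite (kind_lt lt_uv) (arc_lt lt_uv) andbT; case: (ed G u v); rewrite !etype_eqE.
rewrite /down_arc.
case: (ltngtP u v) => [lt_uv|lt_vu|/val_inj ->]; rewrite ?andbF ?arc_irr //.
by rewrite (kind_gt lt_vu) (arc_gt lt_vu) !etype_eqE /=; case: (ed G v u).
Qed.

Hypothesis acyclicG : acyclicb G.
Hypothesis triangleG : triangle_condb G.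

Lemma arc_trans a b c : arc G a b -> arc G b c -> arc G a c.
Proof.
move=> ab bc; have neq_ac : a != c.
  by apply: contraTneq bc => <-; rewrite (arc_asym ab).
case/orP: (arc_total neq_ac) => // ca.
move/forallP: acyclicG => /(_ a) /forallP /(_ b) /implyP /(_ ab) /negP [].
exact: connect_trans (connect1 bc) (connect1 ca).
Qed.

Lemma rank_lt u v : arc G u v -> rank u < rank v.
Proof.
move=> uv; rewrite /rank; apply: (card_proper_mem (x := u)); rewrite ?inE ?arc_irr //.
by apply/subsetP => j; rewrite !inE => /arc_trans; apply.
Qed.

Lemma arc_rank u v : arc G u v = (rank u < rank v).
Proof.
apply/idP/idP => [|lt_uv]; first exact: rank_lt.
have neq_uv : u != v by apply: contraTneq lt_uv => ->; rewrite ltnn.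
case/orP: (arc_total neq_uv) => // /rank_lt lt_vu.
by have := ltn_trans lt_uv lt_vu; rewrite ltnn.
Qed.

Lemma rank_inj : injective rank.
Proof.
move=> u v eq_r; apply/eqP; apply: contraT => /arc_total.
by rewrite !arc_rank eq_r ltnn.
Qed.

Lemma rank_lt_n u : rank u < n.
Proof.
rewrite /rank -[X in _ < X]card_ord -cardsT.
by apply: (card_proper_mem (x := u)); rewrite ?inE ?arc_irr ?subsetT.
Qed.

Definition rank_ord u : 'I_n := Ordinal (rank_lt_n u).

Lemma rank_ord_inj : injective rank_ord.
Proof. by move=> u v /(congr1 val) /rank_inj. Qed.

Lemma rank_onto t : t < n -> exists u, rank u = t.
Proof.
move=> lt_tn; have := inj_card_onto rank_ord_inj (leqnn _) (Ordinal lt_tn).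
by case/codomP => u /(congr1 val) /= ->; exists u.
Qed.

Lemma card_rank_lt m : m <= n -> #|[set u | rank u < m]| = m.
Proof.
move=> le_mn; transitivity #|rank_ord @^-1: [set i : 'I_n | i < m]|.
  by apply: eq_card => u; rewrite !inE.
by rewrite card_preimset ?card_ord_lt //; exact: rank_ord_inj.
Qed.

Lemma triangle_down_arc a b c : arc G a b -> arc G b c -> c < a ->
  Down \in [:: kind G a b; kind G b c] -> down_arc a c.
Proof.
move=> ab bc lt_ca has_down; have ac := arc_trans ab bc.
rewrite /down_arc lt_ca; move: ac; rewrite (arc_gt lt_ca).
move/forallP: triangleG => /(_ a) /forallP /(_ b) /forallP /(_ c).
rewrite !inE in has_down *.
rewrite ab bc (arc_trans ab bc) (kind_gt lt_ca) orbA has_down /=.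
by case: (ed G c a); rewrite !etype_eqE /= ?orbT.
Qed.

Lemma arc_down_arc_trans a b c : arc G a b -> down_arc b c -> c < a -> down_arc a c.
Proof.
move=> ab bc lt_ca; apply: triangle_down_arc ab (down_arc_arc bc) lt_ca _.
by case/andP: bc => lt_cb /eqP e; rewrite (kind_gt lt_cb) e !inE eqxx orbT.
Qed.

Lemma down_arc_arc_trans a b c : down_arc a b -> arc G b c -> c < a -> down_arc a c.
Proof.
move=> ab bc lt_ca; apply: triangle_down_arc (down_arc_arc ab) bc lt_ca _.
by case/andP: ab => lt_ba /eqP e; rewrite (kind_gt lt_ba) e !inE eqxx.
Qed.

Lemma down_arc_src_mono a' a c : down_arc a' c -> rank a <= rank a' -> c < a -> down_arc a c.
Proof.
move=> a'c; rewrite leq_eqVlt => /orP[/eqP/rank_inj -> //|lt_aa'] lt_ca.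
by apply: arc_down_arc_trans a'c lt_ca; rewrite arc_rank.
Qed.

Lemma down_arc_tgt_mono a c v : down_arc a c -> rank c <= rank v -> v < a -> down_arc a v.
Proof.
move=> ac; rewrite leq_eqVlt => /orP[/eqP/rank_inj <- //|lt_cv] lt_va.
by apply: down_arc_arc_trans ac _ lt_va; rewrite arc_rank.
Qed.

Lemma down_arc_rank_mono a' c a v :
  down_arc a' c -> rank a <= rank a' -> rank c <= rank v -> v < a -> down_arc a v.
Proof.
move=> a'c le_aa' le_cv lt_va; case: (ltnP c a) => [lt_ca|le_ac].
  exact: down_arc_tgt_mono (down_arc_src_mono a'c le_aa' lt_ca) le_cv lt_va.
have lt_va' : v < a' := leq_trans lt_va (ltnW (leq_ltn_trans le_ac (down_arc_lt a'c))).
exact: down_arc_src_mono (down_arc_tgt_mono a'c le_cv lt_va') le_aa' lt_va.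
Qed.

Definition reach t :=
  \max_(p : 'I_n * 'I_n | down_arc p.1 p.2 && (rank p.2 < t)) (rank p.1).+1.

Lemma rank_lt_reach t a c : down_arc a c -> rank c < t -> rank a < reach t.
Proof.
move=> ac lt_ct.
by apply: (@leq_bigmax_cond _ _ (fun p => (rank p.1).+1) (a, c)); rewrite /= ac lt_ct.
Qed.

Lemma reach_leq t k :
  (forall a c, down_arc a c -> rank c < t -> rank a < k) -> reach t <= k.
Proof. by move=> ub; apply/bigmax_leqP => -[a c] /= /andP[]; apply: ub. Qed.

Lemma reach_gtP t k : k < reach t ->
  exists a c, [/\ down_arc a c, rank c < t & k <= rank a].
Proof.
move=> lt_k; have [|no_arc] :=
  boolP [exists p : 'I_n * 'I_n, [&& down_arc p.1 p.2, rank p.2 < t & k <= rank p.1]].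
  by case/existsP => -[a c] /and3P[ac lt_ct le_ka]; exists a, c.
move: lt_k; rewrite ltnNge => /negP[]; apply: reach_leq => a c ac lt_ct.
by move/existsPn/(_ (a, c)): no_arc; rewrite /= ac lt_ct ltnNge.
Qed.

Lemma reach0 : reach 0 = 0.
Proof. by apply/eqP; rewrite -leqn0; apply: reach_leq. Qed.

Lemma leq_reachS t : reach t <= reach t.+1.
Proof. by apply: reach_leq => a c ac lt_ct; apply: rank_lt_reach ac (leqW lt_ct). Qed.

Lemma reachS_leq t : reach t.+1 <= t.
Proof.
apply: reach_leq => a c /down_arc_arc; rewrite arc_rank ltnS.
exact: leq_trans.
Qed.

Lemma down_arc_of_reach s a v :
  rank a < reach s -> s <= (rank v).+1 -> v < a -> down_arc a v.
Proof.
case/reach_gtP => [a' [c [a'c lt_cs le_aa']]] le_sv.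
by apply: down_arc_rank_mono a'c le_aa' _; rewrite -ltnS (leq_trans lt_cs).
Qed.

Definition prefix t := [set u | rank u < t].

Lemma prefix_below_sub t w : t <= rank w ->
  [set u in prefix t | u < w] \subset [set u | arc G u w & u < w].
Proof.
move=> le_tw; apply/subsetP => u; rewrite !inE => /andP[lt_ut ->].
by rewrite andbT arc_rank (leq_trans lt_ut).
Qed.

Lemma prefix_above_sub t m w : m <= reach t.+1 -> t <= rank w ->
  [set u in prefix m | w < u] \subset [set u | down_arc u w].
Proof.
move=> le_m le_tw; apply/subsetP => u; rewrite !inE => /andP[lt_um lt_wu].
by apply: down_arc_of_reach (leq_trans lt_um le_m) _ lt_wu; rewrite ltnS.
Qed.

Lemma count_lt_indeg t v w m : rank v = t -> t <= rank w -> m <= reach t.+1 -> v < w ->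
  #|[set u in prefix t | u < w]| + #|[set u in prefix m | w < u]| < indeg G w.
Proof.
move=> rv le_tw le_m lt_vw; rewrite indeg_split -addSn.
apply: leq_add; last exact: subset_leq_card (prefix_above_sub le_m le_tw).
have lt_tw : t < rank w.
  rewrite ltn_neqAle le_tw andbT -rv.
  by apply: contraTneq lt_vw => /rank_inj ->; rewrite ltnn.
apply: (card_proper_mem (x := v)) (prefix_below_sub le_tw) _ _.
  by rewrite inE arc_rank rv lt_tw.
by rewrite !inE rv ltnn.
Qed.

Lemma rank_vertex_candidate t v : rank v = t ->
  v \in candidates (indeg G) (prefix t) (prefix (reach t.+1)).
Proof.
move=> rv; rewrite !inE rv ltnn /= indeg_split; apply/eqP.
congr (_ + _); apply: eq_card => u; rewrite !inE; first by rewrite arc_rank rv.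
apply/idP/andP => [uv|[lt_u lt_vu]]; last by apply: down_arc_of_reach lt_u _ lt_vu; rewrite rv.
by split; [apply: rank_lt_reach uv _; rewrite rv | exact: down_arc_lt].
Qed.

Lemma candidate_leq_rank_vertex t v w : rank v = t ->
  w \in candidates (indeg G) (prefix t) (prefix (reach t.+1)) -> w <= v.
Proof.
move=> rv wC; move: (wC); rewrite !inE -leqNgt => /andP[le_tw _].
rewrite leqNgt; apply: contraTN wC => lt_vw.
exact: notin_candidates (count_lt_indeg rv le_tw (leqnn _) lt_vw).
Qed.

Lemma candidates_eq0 t v m : rank v = t -> reach t <= m -> m < reach t.+1 ->
  candidates (indeg G) (prefix t) (prefix m) = set0.
Proof.
move=> rv le_m lt_m; have [a [c [ac lt_ct le_ma]]] := reach_gtP lt_m.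
have {lt_ct} av : down_arc a v.
  suff <- : c = v by [].
  apply: rank_inj; apply/eqP; rewrite rv eqn_leq -ltnS lt_ct leqNgt /=.
  by apply: contraTN le_ma => /(rank_lt_reach ac) lt_a; rewrite -ltnNge (leq_trans lt_a).
apply/setP => w; rewrite in_set0; apply/negbTE.
case: (boolP (w \in prefix t)) => [wt|]; first by rewrite inE wt.
rewrite inE -leqNgt => le_tw; apply: notin_candidates.
case: (ltnP v w) => [lt_vw|le_wv]; first exact: count_lt_indeg (ltnW lt_m) lt_vw.
have aw : down_arc a w.
  by apply: down_arc_tgt_mono av _ (leq_ltn_trans le_wv (down_arc_lt av)); rewrite rv.
rewrite indeg_split -addnS; apply: leq_add; first exact: subset_leq_card (prefix_below_sub le_tw).
apply: (card_proper_mem (x := a)) (prefix_above_sub (ltnW lt_m) le_tw) _ _.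
  by rewrite inE.
by rewrite !inE ltnNge le_ma.
Qed.

End MixedGraph.

Section DownArcsDetermined.
Variables (n : nat) (G1 G2 : mgraph n).
Hypotheses (acyclic1 : acyclicb G1) (triangle1 : triangle_condb G1).
Hypotheses (acyclic2 : acyclicb G2) (triangle2 : triangle_condb G2).
Hypotheses (rank12 : rank G1 =1 rank G2) (indeg12 : indeg G1 =1 indeg G2).

(* The down arcs into [v] are, in either graph, an initial segment (by rank) of
   the arcs into [v] from larger vertices, and the two segments have the same size. *)
Lemma down_arc_det a v : down_arc G1 a v -> down_arc G2 a v.
Proof.
move=> av1; apply: contraT => not_av2.
have arc12 u w : arc G1 u w = arc G2 u w.
  by rewrite (arc_rank acyclic1) (arc_rank acyclic2) !rank12.
have := indeg12 v; rewrite !indeg_split.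
have -> : [set u | arc G2 u v & u < v] = [set u | arc G1 u v & u < v].
  by apply/setP => u; rewrite !inE arc12.
move/eqP; rewrite eqn_add2l => /eqP card12.
set L := [set b : 'I_n | [&& v < b, arc G1 b v & rank G1 b <= rank G1 a]].
set L' := [set b : 'I_n | [&& v < b, arc G1 b v & rank G1 b < rank G1 a]].
have L_sub : L \subset [set u | down_arc G1 u v].
  apply/subsetP => b; rewrite !inE => /and3P[lt_vb _ le_ba].
  by have := down_arc_src_mono acyclic1 triangle1 av1; apply.
have sub_L' : [set u | down_arc G2 u v] \subset L'.
  apply/subsetP => b; rewrite !inE => bv2.
  rewrite (down_arc_lt bv2) arc12 (down_arc_arc bv2) /= ltnNge.
  apply: contra not_av2 => le_ab; rewrite !rank12 in le_ab.
  by have := down_arc_src_mono acyclic2 triangle2 bv2; apply => //; exact: down_arc_lt av1.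
have lt_L : #|L'| < #|L|.
  apply: (card_proper_mem (x := a)).
  - by apply/subsetP => b; rewrite !inE => /and3P[-> -> /ltnW ->].
  - by rewrite !inE (down_arc_lt av1) (down_arc_arc av1) leqnn.
  - by rewrite !inE ltnn !andbF.
have := leq_ltn_trans (subset_leq_card sub_L') (leq_trans lt_L (subset_leq_card L_sub)).
by rewrite card12 ltnn.
Qed.

End DownArcsDetermined.

Section IndegreesDetermineGraph.
Variables (n : nat) (G1 G2 : mgraph n).
Hypotheses (acyclic1 : acyclicb G1) (triangle1 : triangle_condb G1).
Hypotheses (acyclic2 : acyclicb G2) (triangle2 : triangle_condb G2).
Hypothesis indeg12 : indeg G1 =1 indeg G2.

Definition agree_upto t :=
  (forall u, (rank G1 u < t) || (rank G2 u < t) -> rank G1 u = rank G2 u)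
  /\ reach G1 t = reach G2 t.

Lemma agree_upto0 : agree_upto 0.
Proof. by split; [move=> u; rewrite !ltn0 | rewrite !reach0]. Qed.

Section AgreeStep.
Variable t : nat.
Hypotheses (lt_tn : t < n) (agree_t : agree_upto t).

Lemma prefix_agree m : m <= t -> prefix G1 m = prefix G2 m.
Proof.
case: agree_t => rank12 _ le_mt; apply/setP => u; rewrite !inE.
apply/idP/idP => lt_um.
  by rewrite -rank12 // (leq_trans lt_um le_mt).
by rewrite rank12 // (leq_trans lt_um le_mt) orbT.
Qed.

Lemma candidates_agree m : m <= t ->
  candidates (indeg G1) (prefix G1 t) (prefix G1 m) =
  candidates (indeg G2) (prefix G2 t) (prefix G2 m).
Proof. by move=> le_mt; rewrite !prefix_agree //; apply/setP => v; rewrite !inE indeg12. Qed.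

Lemma reach_agreeS : reach G1 t.+1 = reach G2 t.+1.
Proof.
have [v1 rv1] := rank_onto acyclic1 lt_tn; have [v2 rv2] := rank_onto acyclic2 lt_tn.
have le1 := reachS_leq acyclic1 t; have le2 := reachS_leq acyclic2 t.
case: agree_t => _ reach12.
case: (ltngtP (reach G1 t.+1) (reach G2 t.+1)) => // [lt12|lt21]; exfalso.
  have := rank_vertex_candidate acyclic1 triangle1 rv1.
  rewrite (candidates_agree le1) (candidates_eq0 acyclic2 triangle2 rv2) ?inE //.
  by rewrite -reach12 leq_reachS.
have := rank_vertex_candidate acyclic2 triangle2 rv2.
rewrite -(candidates_agree le2) (candidates_eq0 acyclic1 triangle1 rv1) ?inE //.
by rewrite reach12 leq_reachS.
Qed.

Lemma rank_vertex_agree v1 v2 : rank G1 v1 = t -> rank G2 v2 = t -> v1 = v2.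
Proof.
move=> rv1 rv2; have le1 := reachS_leq acyclic1 t.
have C1 := rank_vertex_candidate acyclic1 triangle1 rv1.
have C2 := rank_vertex_candidate acyclic2 triangle2 rv2.
rewrite (candidates_agree le1) reach_agreeS in C1.
rewrite -reach_agreeS -(candidates_agree le1) in C2.
apply/val_inj/eqP; rewrite eqn_leq.
rewrite (candidate_leq_rank_vertex acyclic2 triangle2 rv2 C1).
exact: (candidate_leq_rank_vertex acyclic1 triangle1 rv1 C2).
Qed.

Lemma agree_uptoS : agree_upto t.+1.
Proof.
split; last exact: reach_agreeS.
have [v1 rv1] := rank_onto acyclic1 lt_tn; have [v2 rv2] := rank_onto acyclic2 lt_tn.
have eq_v := rank_vertex_agree rv1 rv2.
move=> u; case: (boolP ((rank G1 u < t) || (rank G2 u < t))) => [lt_t _|].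
  by case: agree_t => rank12 _; apply: rank12.
rewrite negb_or -!leqNgt => /andP[le1 le2]; rewrite !ltnS => /orP[r1|r2].
  have ru : rank G1 u = t by apply/eqP; rewrite eqn_leq r1 le1.
  by rewrite ru (rank_inj acyclic1 (etrans ru (esym rv1))) eq_v rv2.
have ru : rank G2 u = t by apply/eqP; rewrite eqn_leq r2 le2.
by rewrite ru (rank_inj acyclic2 (etrans ru (esym rv2))) -eq_v rv1.
Qed.

End AgreeStep.

Lemma agree_upto_all t : t <= n -> agree_upto t.
Proof.
elim: t => [_|t IHt lt_tn]; first exact: agree_upto0.
exact: agree_uptoS lt_tn (IHt (ltnW lt_tn)).
Qed.

Lemma rank_agree : rank G1 =1 rank G2.
Proof.
have [rank12 _] := agree_upto_all (leqnn n).
by move=> u; apply: rank12; rewrite rank_lt_n.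
Qed.

Lemma indeg_inj : G1 = G2.
Proof.
have arc12 u w : arc G1 u w = arc G2 u w.
  by rewrite (arc_rank acyclic1) (arc_rank acyclic2) !rank_agree.
have down12 a v : down_arc G1 a v = down_arc G2 a v.
  apply/idP/idP.
    exact: (down_arc_det acyclic1 triangle1 acyclic2 triangle2 rank_agree indeg12).
  by apply: (down_arc_det acyclic2 triangle2 acyclic1 triangle1) => u;
    rewrite ?rank_agree ?indeg12.
apply/ffunP => p; have lt_p : (val p).1 < (val p).2 := valP p.
suff : ed G1 (val p).1 (val p).2 = ed G2 (val p).1 (val p).2.
  by rewrite /ed -surjective_pairing valK.
have := arc12 (val p).1 (val p).2; rewrite !(arc_lt _ lt_p).
case: eqP => [-> /esym/eqP -> //|/eqP not_up1 /esym/negbT not_up2].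
apply: etype_eq_notUp not_up1 not_up2 _.
by have := down12 (val p).2 (val p).1; rewrite /down_arc lt_p.
Qed.

End IndegreesDetermineGraph.

Lemma phi_parking_function n (G : mgraph n) : parking_graph G -> parking_function (phi G).
Proof.
case/andP => acyclicG _; apply/andP; split.
  by apply/allP => _ /tnthP[i ->]; rewrite tnth_mktuple.
apply/forallP => k; rewrite nth_sort_leqE ?size_tuple // count_tuple_card.
rewrite -{1}(card_rank_lt acyclicG (ltn_ord k)); apply: subset_leq_card.
apply/subsetP => u; rewrite !inE tnth_mktuple ltnS => le_uk; apply: leq_trans le_uk.
by apply: subset_leq_card; apply/subsetP => j; rewrite !inE => /andP[].
Qed.

Section Construction.
Variables (n : nat) (d : 'I_n -> nat).
Implicit Types (A : {set 'I_n}) (ps th : 'I_n -> nat) (u v w : 'I_n).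

Definition nbelow A v := #|[set u in A | u < v]|.
Definition nabove A ps m v := #|[set u in A | (ps u < m) && (v < u)]|.

(* A partial parking graph on the vertices [A] placed at positions [ps u < t]:
   a placed [v] receives up arcs from the smaller vertices placed before it and
   down arcs from the larger vertices placed at positions below its threshold [th v]. *)
Record placement t A ps th m : Prop := Placement {
  card_placed : #|A| = t;
  pos_lt : forall u, u \in A -> ps u < t;
  pos_inj : {in A &, injective ps};
  level_le : m <= t;
  thr_le_level : forall u, u \in A -> th u <= m;
  thr_le_pos : forall u, u \in A -> th u <= ps u;
  thr_mono : forall u v, u \in A -> v \in A -> ps u < ps v -> th u <= th v;
  indeg_placed : forall v, v \in A ->
    d v = #|[set u in A | (ps u < ps v) && (u < v)]| + nabove A ps (th v) v;
  indeg_unplaced : forall v, v \notin A -> nbelow A v + nabove A ps m v <= d v }.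

Lemma placement0 : placement 0 set0 (fun=> 0) (fun=> 0) 0.
Proof.
have card0 (P : pred 'I_n) : #|[set u in set0 | P u]| = 0.
  by apply: eq_card0 => u; rewrite !inE.
constructor; rewrite ?cards0 //; try by [move=> u; rewrite inE | move=> u v; rewrite inE].
by move=> v _; rewrite /nbelow /nabove !card0.
Qed.

Lemma nabove_leS A ps m v :
  {in A &, injective ps} -> nabove A ps m.+1 v <= (nabove A ps m v).+1.
Proof.
move=> ps_inj; rewrite /nabove.
apply: leq_trans (_ : _ <= #|[set u in A | (ps u < m) && (v < u)] :|: [set u in A | ps u == m]|) _.
  apply: subset_leq_card; apply/subsetP => u; rewrite !inE => /andP[-> /andP[]].
  by rewrite ltnS leq_eqVlt => /orP[->|->] ->; rewrite ?orbT.
rewrite cardsU; apply: leq_trans (leq_subr _ _) _; rewrite -[X in _ <= X]addn1 leq_add2l.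
apply/card_le1_eqP => x y; rewrite !inE => /andP[xA /eqP px] /andP[yA /eqP py].
by apply: ps_inj => //; rewrite px py.
Qed.

Lemma nbelow_nabove_placed A ps t v : (forall u, u \in A -> ps u < t) -> v \notin A ->
  nbelow A v + nabove A ps t v = #|A|.
Proof.
move=> ps_lt vA; rewrite -(cardsID [set u : 'I_n | u < v] A); congr (_ + _).
  by apply: eq_card => u; rewrite !inE andbC.
apply: eq_card => u; rewrite !inE; case uA: (u \in A); rewrite ?andbF //= ps_lt //=.
have neq_vu : v != u :> nat by apply: contraNneq vA => /ord_inj ->.
by rewrite ltn_neqAle neq_vu leqNgt andbT.
Qed.

Lemma card_setU1_in A v (P : pred 'I_n) : v \notin A ->
  #|[set u in v |: A | P u]| = P v + #|[set u in A | P u]|.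
Proof.
move=> vA; case Pv: (P v).
  have -> : [set u in v |: A | P u] = v |: [set u in A | P u].
    by apply/setP => u; rewrite !inE; case: eqP => [->|] //=; rewrite Pv.
  by rewrite cardsU1 inE (negbTE vA).
apply: eq_card => u; rewrite !inE; case: eqP => [->|] //=.
by rewrite Pv (negbTE vA) andbF.
Qed.

Lemma eq_card_in A (P Q : pred 'I_n) : {in A, P =1 Q} ->
  #|[set u in A | P u]| = #|[set u in A | Q u]|.
Proof. by move=> eqPQ; apply: eq_card => u; rewrite !inE; case uA: (u \in A); rewrite //= eqPQ. Qed.

Definition level_ok A ps m :=
  [forall w, (w \notin A) ==> (nbelow A w + nabove A ps m w <= d w)].

Definition tight A ps m w := (w \notin A) && (d w == nbelow A w + nabove A ps m w).

Lemma level_okP A ps m w : level_ok A ps m -> w \notin A -> nbelow A w + nabove A ps m w <= d w.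
Proof. by move/forallP/(_ w)/implyP. Qed.

(* The largest admissible level [m'] leaves some vertex without slack: either [m' = t],
   where the parking condition provides it, or the level [m'.+1] fails at some vertex. *)
Lemma exists_tight_level t A ps th m : placement t A ps th m -> t < #|[set w | d w <= t]| ->
  exists m', [/\ m <= m' <= t, level_ok A ps m' & exists v, tight A ps m' v].
Proof.
move=> pl d_t; pose P j := (m <= j <= t) && level_ok A ps j.
have Pm : P m.
  rewrite /P leqnn (level_le pl); apply/forallP => w; apply/implyP; exact: (indeg_unplaced pl).
have ubP j : P j -> j <= t by case/andP => /andP[].
case: (ex_maxnP (ex_intro _ m Pm) ubP) => m' /andP[range_m' ok_m'] max_m'.
exists m'; split => //; case/andP: range_m' => le_mm' le_m't.
case: (ltnP m' t) => [lt_m't|le_tm'].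
  have : ~~ level_ok A ps m'.+1.
    apply/negP => ok_m'S; have := max_m' m'.+1.
    by rewrite /P ok_m'S (leqW le_mm') lt_m't ltnn => /(_ isT).
  case/forallPn => w; rewrite negb_imply -ltnNge => /andP[wA lt_d].
  exists w; rewrite /tight wA eqn_leq level_okP //=.
  by rewrite -ltnS (leq_trans lt_d) // -addnS leq_add2l; exact: nabove_leS (pos_inj pl).
have /eqP eq_m't : m' == t by rewrite eqn_leq le_m't.
have : ~~ ([set w | d w <= t] \subset A).
  by apply: contraTN d_t => /subset_leq_card; rewrite -leqNgt (card_placed pl).
case/subsetPn => w; rewrite inE => le_dt wA; exists w; rewrite /tight wA eqn_leq level_okP //=.
by rewrite andbT eq_m't nbelow_nabove_placed ?(card_placed pl) //; exact: pos_lt pl.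
Qed.

Definition update (f : 'I_n -> nat) v x u := if u == v then x else f u.

Lemma update_notin f v x u : u != v -> update f v x u = f u.
Proof. by rewrite /update => /negbTE ->. Qed.

Lemma update_at f v x : update f v x v = x.
Proof. by rewrite /update eqxx. Qed.

Section Extend.
Variables (t : nat) (A : {set 'I_n}) (ps th : 'I_n -> nat) (m m' : nat) (v : 'I_n).
Hypotheses (pl : placement t A ps th m) (le_mm' : m <= m') (le_m't : m' <= t).
Hypotheses (ok_m' : level_ok A ps m') (tight_v : tight A ps m' v).
Hypothesis v_max : forall w, tight A ps m' w -> w <= v.

Let ps' := update ps v t.
Let th' := update th v m'.

Lemma notin_placed : v \notin A.
Proof. by case/andP: tight_v. Qed.

Lemma neq_placed u : u \in A -> u != v.
Proof. by apply: contraTneq => ->; exact: notin_placed. Qed.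

Lemma nabove_update m1 w : nabove (v |: A) ps' m1 w = (t < m1) && (w < v) + nabove A ps m1 w.
Proof.
rewrite /nabove /ps' card_setU1_in ?notin_placed // update_at; congr (_ + _).
by apply: eq_card_in => u /neq_placed uv; rewrite /= update_notin.
Qed.

Lemma indeg_placed_extend w : w \in v |: A ->
  d w = #|[set u in v |: A | (ps' u < ps' w) && (u < w)]| + nabove (v |: A) ps' (th' w) w.
Proof.
have vA := notin_placed; rewrite nabove_update card_setU1_in // in_setU1.
case/orP => [/eqP ->|wA].
  rewrite /th' /ps' !update_at !ltnn !andbF add0n; case/andP: tight_v => _ /eqP ->.
  congr (_ + _); apply: eq_card_in => u uA /=.
  by rewrite update_notin ?neq_placed // (pos_lt pl uA).
have wv := neq_placed wA; rewrite /th' /ps' !(update_notin _ _ wv) update_at.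
have le_th : th w <= t := leq_trans (thr_le_level pl wA) (leq_trans le_mm' le_m't).
rewrite ltnNge (ltnW (pos_lt pl wA)) [t < _]ltnNge le_th /= !add0n (indeg_placed pl wA).
by congr (_ + _); apply: eq_card_in => u /neq_placed uv; rewrite /= update_notin.
Qed.

Lemma indeg_unplaced_extend w : w \notin v |: A ->
  nbelow (v |: A) w + nabove (v |: A) ps' m' w <= d w.
Proof.
rewrite in_setU1 negb_or => /andP[wv wA].
rewrite nabove_update /nbelow card_setU1_in ?notin_placed // [t < _]ltnNge le_m't /= add0n.
case: (ltnP v w) => [lt_vw|_]; last by rewrite add0n; exact: level_okP.
have : ~~ tight A ps m' w by apply: contraTN lt_vw => /v_max; rewrite -leqNgt.
rewrite /tight wA /= => not_tight; rewrite add1n addSn.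
by rewrite ltn_neqAle eq_sym not_tight level_okP.
Qed.

Lemma placement_extend : placement t.+1 (v |: A) ps' th' m'.
Proof.
have vA := notin_placed.
constructor.
- by rewrite cardsU1 vA (card_placed pl).
- move=> u; rewrite in_setU1 => /orP[/eqP ->|uA]; first by rewrite /ps' update_at.
  by rewrite /ps' update_notin ?neq_placed //; exact: leqW (pos_lt pl uA).
- move=> u w; rewrite !in_setU1 /ps' => /orP[/eqP ->|uA] /orP[/eqP ->|wA] //.
  + by rewrite update_at update_notin ?neq_placed // => e; have := pos_lt pl wA; rewrite -e ltnn.
  + by rewrite update_at update_notin ?neq_placed // => e; have := pos_lt pl uA; rewrite e ltnn.
  + by rewrite !update_notin ?neq_placed //; exact: (pos_inj pl).
- exact: leqW.
- move=> u; rewrite in_setU1 /th' => /orP[/eqP ->|uA]; first by rewrite update_at.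
  by rewrite update_notin ?neq_placed // (leq_trans (thr_le_level pl uA)).
- move=> u; rewrite in_setU1 /th' /ps' => /orP[/eqP ->|uA]; first by rewrite !update_at.
  by rewrite !update_notin ?neq_placed // (thr_le_pos pl).
- move=> u w; rewrite !in_setU1 /th' /ps' => /orP[/eqP ->|uA] /orP[/eqP ->|wA] //.
  + by rewrite update_at (update_notin _ _ (neq_placed wA)) ltnNge (ltnW (pos_lt pl wA)).
  + rewrite !update_at !(update_notin _ _ (neq_placed uA)) => _.
    exact: leq_trans (thr_le_level pl uA) le_mm'.
  + rewrite !(update_notin _ _ (neq_placed uA)) !(update_notin _ _ (neq_placed wA)).
    exact: (thr_mono pl).
- exact: indeg_placed_extend.
- exact: indeg_unplaced_extend.
Qed.

End Extend.

Lemma placement_step t A ps th m : placement t A ps th m -> t < #|[set w | d w <= t]| ->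
  exists A' ps' th' m', placement t.+1 A' ps' th' m'.
Proof.
move=> pl d_t; have [m' [/andP[le_mm' le_m't] ok_m' [v0 tight_v0]]] := exists_tight_level pl d_t.
case: (@arg_maxnP _ v0 (tight A ps m') val tight_v0) => v tight_v v_max.
exists (v |: A), (update ps v t), (update th v m'), m'.
exact: (placement_extend pl le_mm' le_m't ok_m' tight_v v_max).
Qed.

Hypothesis d_parking : forall t, t < n -> t < #|[set w | d w <= t]|.

Lemma placement_exists t : t <= n -> exists A ps th m, placement t A ps th m.
Proof.
elim: t => [_|t IHt lt_tn]; first by exists set0, (fun=> 0), (fun=> 0), 0; exact: placement0.
have [A [ps [th [m pl]]]] := IHt (ltnW lt_tn).
exact: placement_step pl (d_parking lt_tn).
Qed.

End Construction.

Definition graph_of n (ps th : 'I_n -> nat) : mgraph n :=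
  [ffun p : pairs n => if ps (val p).1 < ps (val p).2 then Up
                      else if ps (val p).2 < th (val p).1 then Down else Downish].

Lemma ed_graph_of n (ps th : 'I_n -> nat) (j k : 'I_n) : j < k ->
  ed (graph_of ps th) j k =
    if ps j < ps k then Up else if ps k < th j then Down else Downish.
Proof.
move=> lt_jk; have lt_p : (j, k).1 < (j, k).2 := lt_jk.
by rewrite /ed (insubT (fun p : 'I_n * 'I_n => p.1 < p.2) lt_p) ffunE.
Qed.

Section Realization.
Variables (n : nat) (d : 'I_n -> nat) (A : {set 'I_n}) (ps th : 'I_n -> nat) (m : nat).
Hypothesis pl : placement d n A ps th m.
Let G := graph_of ps th.

Lemma placed_all u : u \in A.
Proof.
suff -> : A = setT by rewrite inE.
by apply/eqP; rewrite eqEcard subsetT cardsT card_ord (card_placed pl) leqnn.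
Qed.

Lemma pos_injective : injective ps.
Proof. by move=> u v; apply: (pos_inj pl); apply: placed_all. Qed.

Lemma arc_graph_of u v : arc G u v = (ps u < ps v).
Proof.
case: (ltngtP u v) => [lt_uv|lt_vu|/val_inj ->]; last by rewrite arc_irr ltnn.
  rewrite (arc_lt _ lt_uv) ed_graph_of //.
  by case: ifP => _; [rewrite eqxx | case: ifP; rewrite etype_eqE].
rewrite (arc_gt _ lt_vu) ed_graph_of //; case: ifP => [lt_vu'|/negbT].
  by rewrite eqxx ltnNge (ltnW lt_vu').
rewrite -leqNgt leq_eqVlt => /orP[/eqP/pos_injective eq_uv|->].
  by rewrite eq_uv ltnn in lt_vu.
by case: ifP; rewrite etype_eqE.
Qed.

Lemma kind_graph_of u v : ps u < ps v ->
  kind G u v = if u < v then Up else if ps u < th v then Down else Downish.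
Proof.
move=> lt_uv; case: (ltngtP u v) => [lt|gt|/val_inj eq_uv].
- by rewrite (kind_lt _ lt) ed_graph_of // lt_uv.
- by rewrite (kind_gt _ gt) ed_graph_of // ltnNge (ltnW lt_uv).
- by rewrite eq_uv ltnn in lt_uv.
Qed.

Lemma connect_graph_of u v : connect (arc G) u v -> ps u <= ps v.
Proof.
case/connectP => p; elim: p u => [u _ -> //|w p IHp u /= /andP[uw pw] last_v].
by rewrite arc_graph_of in uw; apply: leq_trans (ltnW uw) (IHp w pw last_v).
Qed.

Lemma graph_of_acyclic : acyclicb G.
Proof.
apply/forallP => u; apply/forallP => v; apply/implyP; rewrite arc_graph_of => lt_uv.
by apply/negP => /connect_graph_of; rewrite leqNgt lt_uv.
Qed.

Lemma kind_graph_of_Down u v : ps u < ps v -> kind G u v = Down -> ps u < th v.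
Proof. by move/kind_graph_of ->; case: ifP => // _; case: ifP. Qed.

Lemma kind_graph_of_Downish u v : ps u < ps v -> kind G u v = Downish -> th v <= ps u.
Proof. by move/kind_graph_of ->; case: ifP => // _; case: ifP => // /negbT; rewrite -leqNgt. Qed.

(* A downish source-sink edge [ac] means [th c <= ps a], whereas a down edge [ab]
   or [bc] gives [ps a < th c] because thresholds increase along the order. *)
Lemma graph_of_triangle : triangle_condb G.
Proof.
apply/forallP => a; apply/forallP => b; apply/forallP => c.
apply/implyP; rewrite !arc_graph_of => /and3P[ab bc ac].
apply/implyP => has_down; apply/implyP => _; apply/negP => /eqP ac_downish.
have := kind_graph_of_Downish ac ac_downish; apply/negP; rewrite -ltnNge.
have le_th : th b <= th c by apply: (thr_mono pl) => //; apply: placed_all.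
move: has_down; rewrite !inE => /or3P[/eqP e|/eqP e|/eqP e].
- exact: leq_trans (kind_graph_of_Down ab (esym e)) le_th.
- exact: ltn_trans ab (kind_graph_of_Down bc (esym e)).
- by rewrite -e in ac_downish.
Qed.

Lemma graph_of_parking : parking_graph G.
Proof. by rewrite /parking_graph graph_of_acyclic graph_of_triangle. Qed.

Lemma indeg_graph_of v : indeg G v = d v.
Proof.
rewrite indeg_split (indeg_placed pl (placed_all v)); congr (_ + _).
  by apply: eq_card => u; rewrite !inE arc_graph_of placed_all.
apply: eq_card => u; rewrite !inE placed_all /down_arc /=.
case: (ltnP v u) => [lt_vu|]; last by rewrite andbF.
rewrite andbT ed_graph_of // ltnNge.
case: (ltnP (ps u) (th v)) => [lt_uth|le_thu] /=.
  by rewrite (ltnW (leq_trans lt_uth (thr_le_pos pl (placed_all v)))) etype_eqE.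
by case: (leqP (ps u) (ps v)); rewrite etype_eqE.
Qed.

End Realization.

Lemma parking_function_phi_surj n (x : n.-tuple nat) : parking_function x ->
  exists2 G : mgraph n, parking_graph G & phi G = x.
Proof.
case/andP => /allP x_pos /forallP x_parking.
pose d (v : 'I_n) := (tnth x v).-1.
have d_parking t : t < n -> t < #|[set v | d v <= t]|.
  move=> lt_tn; have := x_parking (Ordinal lt_tn).
  rewrite nth_sort_leqE ?size_tuple // count_tuple_card => /leq_trans; apply.
  by apply: subset_leq_card; apply/subsetP => v; rewrite !inE /d; case: (tnth x v).
have [A [ps [th [m pl]]]] := placement_exists d_parking (leqnn n).
exists (graph_of ps th); first exact: graph_of_parking pl.
apply: eq_from_tnth => i; rewrite tnth_mktuple (indeg_graph_of pl) /d prednK //.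
exact/x_pos/mem_tnth.
Qed.

Lemma phi_inj n : {in [pred G : mgraph n | parking_graph G] &, injective (@phi n)}.
Proof.
move=> G1 G2; rewrite !inE => /andP[acyclic1 triangle1] /andP[acyclic2 triangle2] eq_phi.
apply: indeg_inj acyclic1 triangle1 acyclic2 triangle2 _ => i.
by have := congr1 (fun t => tnth t i) eq_phi; rewrite !tnth_mktuple => -[].
Qed.

Theorem theorem2p2 (n : nat) :
  (forall G : mgraph n, parking_graph G -> parking_function (phi G)) /\
  {in [pred G : mgraph n | parking_graph G] &, injective (@phi n)} /\
  (forall x : n.-tuple nat, parking_function x ->
     exists2 G : mgraph n, parking_graph G & phi G = x).
Proof.
split; first exact: phi_parking_function.
split; [exact: phi_inj | exact: parking_function_phi_surj].
Qed.
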